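(* Let $\alpha\in(0,1]$ and $a,b\in\mathbb{R}$ with $0\le a<b$. Let $g:[a,b]\to[0,1]$ be $\alpha$-fractional integrable on $[a,b]$, and define $$ \ell:=\frac{\alpha(b-a)}{b^\alpha-a^\alpha}\int_a^b g(t)\,d_\alpha t. $$ Then $\ell\in[0,b-a]$ and $$ \int_{b-\ell}^b 1\,d_\alpha t\le\int_a^b g(t)\,d_\alpha t\le\int_a^{a+\ell}1\,d_\alpha t. $$
   Context: For $\alpha\in(0,1]$ and $0\le a<b$, $\int_a^b f(t)\,d_\alpha t:=\int_a^b f(t)\,t^{\alpha-1}\,dt$, and $f$ is called $\alpha$-fractional integrable on $[a,b]$ if this integral exists and is finite. *)

From HB Require Import structures.
From mathcomp Require Import all_boot all_order all_algebra.
From mathcomp Require Import all_classical all_reals all_analysis.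
Set Implicit Arguments. Unset Strict Implicit. Unset Printing Implicit Defensive.
Import Order.TTheory GRing.Theory Num.Theory.
Import numFieldNormedType.Exports.
Local Open Scope classical_set_scope.
Local Open Scope ring_scope.

Definition frac_integrand {R : realType} (alpha : R) (f : R -> R) (t : R) : \bar R :=
  (f t * t `^ (alpha - 1))%:E.

Definition frac_integrable {R : realType} (alpha a b : R) (f : R -> R) : Prop :=
  (@lebesgue_measure R).-integrable `[a, b] (frac_integrand alpha f).

(* int_a^b f(t) d_alpha t = int_a^b f(t) t^(alpha-1) dt (real value) *)
Definition frac_int {R : realType} (alpha a b : R) (f : R -> R) : R :=
  fine (\int[@lebesgue_measure R]_(t in `[a, b]) frac_integrand alpha f t).

From HB Require Import structures.
From mathcomp Require Import all_boot all_order all_algebra.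
From mathcomp Require Import all_classical all_reals all_analysis.
From mathcomp Require Import measurable_realfun.
From mathcomp Require Import ring lra.
Import Order.TTheory GRing.Theory Num.Theory.
Import numFieldNormedType.Exports.
Local Open Scope classical_set_scope.
Local Open Scope ring_scope.

(* By the fundamental theorem of calculus, int_x^y 1 d_alpha t equals
   (y^alpha - x^alpha)/alpha (monotone convergence handles the singularity of
   t^(alpha-1) at 0).  Since 0 <= g <= 1, the integral I of g is a fraction
   s in [0, 1] of J := int_a^b 1 d_alpha t, and l = s (b - a).  Concavity of
   t |-> t^alpha gives (a + l)^alpha >= s b^alpha + (1 - s) a^alpha and
   (b - l)^alpha >= (1 - s) b^alpha + s a^alpha, which are exactly the two
   inequalities int_a^(a+l) 1 >= s J = I and int_(b-l)^b 1 <= s J = I. *)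

Section powR_integral.
Context {R : realType}.
Local Notation mu := (@lebesgue_measure R).

(* Convexity of [t |-> t^(1/al)] transported through the bijection [t |-> t^al]. *)
Lemma powR_concave {al s : R} (u v : R) : 0 < al -> al <= 1 ->
  0 <= s <= 1 -> 0 <= u -> 0 <= v ->
  s * u `^ al + (1 - s) * v `^ al <= (s * u + (1 - s) * v) `^ al.
Proof.
move=> al_gt0 al_le1 /andP[s_ge0 s_le1] u_ge0 v_ge0.
have inv_al_ge1 : 1 <= al^-1 by rewrite invf_ge1.
have nneg_pow w : w `^ al \in (`[0, +oo[%classic : set R).
  by rewrite inE /= in_itv /= andbT powR_ge0.
have := convex_powR inv_al_ge1 (Itv01 s_ge0 s_le1) (nneg_pow u) (nneg_pow v).
rewrite !convRE /= -!powRrM mulfV ?gt_eqF // !powRr1 // => convex_ineq.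
have := ge0_ler_powR (ltW al_gt0) _ _ convex_ineq.
rewrite -powRrM mulVf ?gt_eqF // powRr1 ?addr_ge0 ?mulr_ge0 ?powR_ge0 ?subr_ge0 //.
apply; rewrite nnegrE ?powR_ge0 //.
by rewrite addr_ge0 // mulr_ge0 ?subr_ge0.
Qed.

Lemma continuous_powR_gt0 (p x : R) : 0 < x -> {for x, continuous (fun t : R => t `^ p)}.
Proof.
move=> x_gt0; apply/differentiable_continuous/derivable1_diffP.
by apply: derivable_powR; rewrite in_itv /= andbT.
Qed.

Lemma measurable_fun_EFin_powR (p : R) (D : set R) : measurable D ->
  measurable_fun D (EFin \o (fun t : R => t `^ p)).
Proof.
by move=> mD; apply/measurable_EFinP/measurable_funTS; exact: measurable_powR.
Qed.

Lemma integral_itv_powR_gt0 (al x y : R) : 0 < al -> 0 < x -> x < y ->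
  (\int[mu]_(t in `[x, y]) (t `^ (al - 1))%:E = ((y `^ al - x `^ al) / al)%:E)%E.
Proof.
move=> al_gt0 x_gt0 xy; rewrite mulrBl.
apply: (@continuous_FTC2 R _ (fun t => t `^ al / al)) => //.
- apply/continuous_in_subspaceT => t; rewrite inE /= in_itv /= => /andP[xt _].
  exact: continuous_powR_gt0 (lt_le_trans x_gt0 xt).
- split.
  + move=> t; rewrite in_itv /= => /andP[xt _]; apply: derivableM => //.
    by apply: derivable_powR; rewrite in_itv /= andbT (lt_trans x_gt0 xt).
  + apply: cvg_at_right_filter; apply: cvgMr_tmp.
    exact: continuous_powR_gt0.
  + apply: cvg_at_left_filter; apply: cvgMr_tmp.
    exact: continuous_powR_gt0 (lt_trans x_gt0 xy).
- move=> t; rewrite in_itv /= => /andP[xt _].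
  have t_pos : t \in `]0, +oo[ by rewrite in_itv /= andbT (lt_trans x_gt0 xt).
  rewrite derive1E deriveM //=; last exact: derivable_powR.
  rewrite derive_cst scaler0 add0r -derive1E powR_derive1 //.
  by rewrite scalerA mulVf ?gt_eqF // scale1r.
Qed.

(* Monotone convergence along the exhaustion of ]0, y] by [y/(n+2), y]. *)
Lemma integral_itv0_powR (al y : R) : 0 < al -> 0 < y ->
  (\int[mu]_(t in `[0%R, y]) (t `^ (al - 1))%:E = ((y `^ al) / al)%:E)%E.
Proof.
move=> al_gt0 y_gt0.
pose u n : R := y * harmonic n.+1.
have u_gt0 n : 0 < u n by rewrite mulr_gt0 // harmonic_gt0.
have u_lt_y n : u n < y by rewrite gtr_pMr // invf_lt1 // ltr1n.
have u_cvg0 : u n @[n --> \oo] --> 0.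
  rewrite -(mulr0 y); apply: cvgMl_tmp.
  by rewrite (cvg_shiftS (@harmonic R)); exact: cvg_harmonic.
pose F n := `[u n, y]%classic.
have F_nondecreasing : nondecreasing_seq F.
  apply/nondecreasing_seqP => n; rewrite subsetEset => t.
  rewrite /F /= !in_itv /= => /andP[ut ->]; rewrite andbT (le_trans _ ut) //.
  by rewrite /u /= ler_pM2l // lef_pV2 ?posrE // ler_nat.
have F_cover : \bigcup_n F n = `]0, y]%classic.
  apply/seteqP; split => t /=.
    move=> [n _]; rewrite /F /= !in_itv /= => /andP[ut ->].
    by rewrite andbT (lt_le_trans (u_gt0 n) ut).
  rewrite in_itv /= => /andP[t_gt0 ty].
  exists (Num.bound (y / t)) => //; rewrite /F /= in_itv /= ty andbT.
  rewrite /u /= ler_pdivrMr // mulrC -ler_pdivrMr //.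
  apply: (le_trans (ltW (archi_boundP _))); first by rewrite divr_ge0 // ltW.
  by rewrite ler_nat ltnW.
have int_F : ((fun n => \int[mu]_(t in F n) (t `^ (al - 1))%:E) =
    (fun n => ((y `^ al - u n `^ al) / al)%:E))%E.
  by apply: funext => n; rewrite integral_itv_powR_gt0.
have int_cvg := @ge0_nondecreasing_set_cvg_integral _ (measurableTypeR R) R F _ mu
  F_nondecreasing (fun=> measurable_itv _)
  (fun=> measurable_fun_EFin_powR _ _ (measurable_itv _))
  (fun _ t _ => powR_ge0 t (al - 1)).
rewrite F_cover int_F in int_cvg.
have lim_cvg : ((y `^ al - u n `^ al) / al)%:E @[n --> \oo] --> ((y `^ al / al)%:E)%E.
  rewrite -[X in X / al](subr0 (y `^ al)).
  apply: cvg_EFin; first exact: nearW.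
  apply: cvgMr_tmp; apply: cvgB; first exact: cvg_cst.
  apply: (cvg_at_rightP (fun t => t `^ al) 0 0).1; first exact: powR_cvg0.
  by split.
rewrite -integral_itv_obnd_cbnd; last exact: measurable_fun_EFin_powR.
exact: cvg_unique _ int_cvg lim_cvg.
Qed.

Lemma integral_itv_powR (al x y : R) : 0 < al -> 0 <= x -> x <= y ->
  (\int[mu]_(t in `[x, y]) (t `^ (al - 1))%:E = ((y `^ al - x `^ al) / al)%:E)%E.
Proof.
move=> al_gt0 x_ge0; rewrite le_eqVlt => /predU1P[<-|xy].
  by rewrite set_itv1 integral_set1 subrr mul0r.
move: x_ge0 xy; rewrite le_eqVlt => /predU1P[<-|x_gt0] xy; last first.
  exact: integral_itv_powR_gt0.
by rewrite integral_itv0_powR // powR0 ?gt_eqF // subr0.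
Qed.

End powR_integral.

Section frac_int_bounds.
Context {R : realType} {alpha : R}.
Hypothesis alpha_gt0 : 0 < alpha.

Lemma frac_integrand1 : frac_integrand alpha (fun=> 1) = fun t => (t `^ (alpha - 1))%:E.
Proof. by apply: funext => t; rewrite /frac_integrand mul1r. Qed.

Lemma frac_int1 (x y : R) : 0 <= x -> x <= y ->
  frac_int alpha x y (fun=> 1) = (y `^ alpha - x `^ alpha) / alpha.
Proof. by move=> x_ge0 xy; rewrite /frac_int frac_integrand1 integral_itv_powR. Qed.

Lemma frac_int_unit_bounds {a b : R} {g : R -> R} : 0 <= a -> a <= b ->
  (forall t, a <= t <= b -> 0 <= g t <= 1) -> frac_integrable alpha a b g ->
  0 <= frac_int alpha a b g <= frac_int alpha a b (fun=> 1).
Proof.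
move=> a_ge0 ab g01 g_int.
pose X := (\int[@lebesgue_measure R]_(t in `[a, b]) frac_integrand alpha g t)%E.
have integrand_ge0 t : t \in `[a, b] -> (0 <= frac_integrand alpha g t)%E.
  rewrite in_itv /= => /g01 /andP[g_ge0 _].
  by rewrite lee_fin mulr_ge0 ?powR_ge0.
have X_ge0 : (0 <= X)%E by apply: integral_ge0 => t /integrand_ge0.
have X_le : (X <= (frac_int alpha a b (fun=> 1))%:E)%E.
  rewrite frac_int1 // -integral_itv_powR //.
  apply: ge0_le_integral => //.
  - exact: measurable_int g_int.
  - exact: measurable_fun_EFin_powR.
  - move=> t; rewrite /= in_itv /= => /g01 /andP[_ g_le1].
    by rewrite lee_fin ler_piMl ?powR_ge0.
have X_fin : X \is a fin_num by rewrite ge0_fin_numE // (le_lt_trans X_le) ?ltry.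
by rewrite /frac_int -/X fine_ge0 //= -lee_fin fineK.
Qed.

Hypothesis alpha_le1 : alpha <= 1.
Variables (a b : R).
Hypotheses (a_ge0 : 0 <= a) (ab : a <= b).

Lemma frac_int1_left_ge (s : R) : 0 <= s <= 1 ->
  s * frac_int alpha a b (fun=> 1) <= frac_int alpha a (a + s * (b - a)) (fun=> 1).
Proof.
move=> s01; have /andP[s_ge0 _] := s01.
rewrite !frac_int1 ?lerDl ?mulr_ge0 ?subr_ge0 // mulrA.
apply: ler_wpM2r; first by rewrite invr_ge0 ltW.
have := powR_concave b a alpha_gt0 alpha_le1 s01 (le_trans a_ge0 ab) a_ge0.
rewrite (_ : s * b + (1 - s) * a = a + s * (b - a)); [lra | ring].
Qed.

Lemma frac_int1_right_le (s : R) : 0 <= s <= 1 ->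
  frac_int alpha (b - s * (b - a)) b (fun=> 1) <= s * frac_int alpha a b (fun=> 1).
Proof.
move=> /andP[s_ge0 s_le1].
have ba_ge0 : 0 <= b - a by rewrite subr_ge0.
have sba_le : s * (b - a) <= b - a by rewrite ler_piMl.
rewrite !frac_int1 ?gerBl ?mulr_ge0 //; last by rewrite subr_ge0 (le_trans sba_le) ?gerBl.
rewrite mulrA; apply: ler_wpM2r; first by rewrite invr_ge0 ltW.
have s'01 : 0 <= 1 - s <= 1 by rewrite subr_ge0 s_le1 gerBl.
have := powR_concave b a alpha_gt0 alpha_le1 s'01 (le_trans a_ge0 ab) a_ge0.
rewrite (_ : (1 - s) * b + (1 - (1 - s)) * a = b - s * (b - a)); [lra | ring].
Qed.

End frac_int_bounds.

Theorem mainTheorem4 (R : realType) (alpha a b : R) (g : R -> R) :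
  0 < alpha -> alpha <= 1 -> 0 <= a -> a < b ->
  (forall t, a <= t <= b -> 0 <= g t <= 1) ->
  frac_integrable alpha a b g ->
  let l := alpha * (b - a) / (b `^ alpha - a `^ alpha) * frac_int alpha a b g in
  (0 <= l <= b - a) /\
  frac_int alpha (b - l) b (fun=> 1) <= frac_int alpha a b g /\
  frac_int alpha a b g <= frac_int alpha a (a + l) (fun=> 1).
Proof.
move=> alpha_gt0 alpha_le1 a_ge0 ab g01 g_int l.
have powR_lt : a `^ alpha < b `^ alpha.
  by apply: gt0_ltr_powR; rewrite ?nnegrE ?(le_trans a_ge0 (ltW ab)).
have J_gt0 : 0 < frac_int alpha a b (fun=> 1).
  by rewrite frac_int1 ?(ltW ab) // divr_gt0 // subr_gt0.
have /andP[I_ge0 I_le_J] := frac_int_unit_bounds alpha_gt0 a_ge0 (ltW ab) g01 g_int.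
set J := frac_int alpha a b (fun=> 1) in J_gt0 I_le_J.
set I := frac_int alpha a b g in l I_ge0 I_le_J *.
pose s := I / J.
have s01 : 0 <= s <= 1 by rewrite /s divr_ge0 ?(ltW J_gt0) //= ler_pdivrMr // mul1r.
have IE : I = s * J by rewrite /s divfK ?gt_eqF.
have lE : l = s * (b - a).
  by rewrite /l /s /J frac_int1 ?(ltW ab) // invf_div; ring.
have ba_ge0 : 0 <= b - a by rewrite subr_ge0 ltW.
split; first by case/andP: s01 => s_ge0 s_le1; rewrite lE mulr_ge0 ?ler_piMl.
rewrite IE lE; split.
- by apply: frac_int1_right_le => //; exact: ltW.
- by apply: frac_int1_left_ge => //; exact: ltW.
Qed.
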